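(* A real symmetric $3\times 3$ matrix $A$ has symmetric Kapranov rank two if and only if it has symmetric tropical rank two.
   Context: Let $\tilde K$ be the field of Hahn series $\sum_{\alpha\in A}c_\alpha t^\alpha$ ($A\subset\mathbb R$ well-ordered, $c_\alpha\in\mathbb C$); for nonzero $a\in\tilde K$, $\deg(a)$ is the smallest exponent with nonzero coefficient. A symmetric lift of a real symmetric matrix $A$ is a symmetric matrix $\tilde A$ over $\tilde K$ with all entries nonzero and $\deg(\tilde a_{i,j})=A_{i,j}$; the symmetric Kapranov rank of $A$ is the minimum rank of a symmetric lift. For an $r\times r$ submatrix of $A$ with row index set $I$ and column index set $J$, each bijection $\rho:I\to J$ gives a monomial $\prod_{i\in I}X_{i,\rho(i)}$ in commuting variables subject to $X_{i,j}=X_{j,i}$, with value $\sum_{i\in I}A_{i,\rho(i)}$; the submatrix is symmetrically tropically singular if the minimum value is attained by at least two distinct monomials. The symmetric tropical rank of $A$ is the largest $r$ such that $A$ has an $r\times r$ submatrix that is not symmetrically tropically singular. *)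

From HB Require Import structures.
From mathcomp Require Import all_boot all_order all_algebra all_fingroup.
From mathcomp Require Import complex.
From mathcomp Require Import boolp classical_sets functions cardinality fsbigop.
From mathcomp Require Import reals Rstruct.
From Stdlib Require Import Rdefinitions.

Set Implicit Arguments.
Unset Strict Implicit.
Unset Printing Implicit Defensive.
Import Order.TTheory GRing.Theory Num.Theory.
Local Open Scope classical_set_scope.
Local Open Scope ring_scope.

Local Open Scope complex_scope.
Definition CC : Type := (Rdefinitions.R)[i].
Local Close Scope complex_scope.

(** Formal series over C with real exponents: a coefficient function. *)
Definition series := Rdefinitions.R -> CC.

Definition supp (a : series) : set Rdefinitions.R := [set x | a x != 0].

Definition is_hahn (a : series) : Prop :=
  forall S : set Rdefinitions.R, S `<=` supp a -> S !=set0 ->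
    exists m, S m /\ (forall x, S x -> (m <= x)%R).

Definition hzero : series := fun _ => 0.
Definition hone : series := fun x => if x == 0%R then 1 else 0.
Definition hadd (a b : series) : series := fun x => a x + b x.
Definition hopp (a : series) : series := fun x => - a x.
(** Cauchy product: the sum is finite when a and b are Hahn series. *)
Definition hmul (a b : series) : series := fun g =>
  \sum_(x \in [set x : Rdefinitions.R | a x != 0 /\ b (g - x)%R != 0]) (a x * b (g - x)%R).

Definition has_deg (a : series) (d : Rdefinitions.R) : Prop :=
  a d != 0 /\ forall x, (x < d)%R -> a x = 0.

Definition minor (n k : nat) (M : 'I_n -> 'I_n -> series) (f g : 'I_k -> 'I_n) : series :=
  \big[hadd/hzero]_(s : 'S_k)
     ((if odd_perm s then hopp else id) (\big[hmul/hone]_(i : 'I_k) M (f i) (g (s i)))).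

Definition has_nonzero_minor (n : nat) (M : 'I_n -> 'I_n -> series) (k : nat) : Prop :=
  exists f g : 'I_k -> 'I_n, injective f /\ injective g /\ minor M f g <> hzero.

Definition rank_is (n : nat) (M : 'I_n -> 'I_n -> series) (r : nat) : Prop :=
  has_nonzero_minor M r /\ forall k : nat, leq r.+1 k -> ~ has_nonzero_minor M k.

Definition sym_lift (n : nat) (A : 'M[Rdefinitions.R]_n) (L : 'I_n -> 'I_n -> series) : Prop :=
  (forall i j, L i j = L j i) /\
  (forall i j, is_hahn (L i j)) /\
  (forall i j, L i j <> hzero) /\
  (forall i j, has_deg (L i j) (A i j)).

Definition sym_kapranov_rank_is (n : nat) (A : 'M[Rdefinitions.R]_n) (r : nat) : Prop :=
  (exists L, sym_lift A L /\ rank_is L r) /\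
  (forall L s, sym_lift A L -> rank_is L s -> leq r s).

(** Tropical side.  An r x r submatrix is given by injective row/column index
    maps f, g : 'I_r -> 'I_n; bijections rho : I -> J correspond to permutations
    s of 'I_r via rho (f i) = g (s i). *)
(** Monomial of s: multiplicity of the variable X_{p,q} = X_{q,p}. *)
Definition sym_monomial (n r : nat) (f g : 'I_r -> 'I_n) (s : 'S_r) (p q : 'I_n) : nat :=
  #|[set i : 'I_r | ((f i == p) && (g (s i) == q)) || ((f i == q) && (g (s i) == p))]|.

Definition trop_value (n r : nat) (A : 'M[Rdefinitions.R]_n) (f g : 'I_r -> 'I_n) (s : 'S_r)
  : Rdefinitions.R := \sum_(i : 'I_r) A (f i) (g (s i)).

Definition sym_trop_singular (n r : nat) (A : 'M[Rdefinitions.R]_n) (f g : 'I_r -> 'I_n) : Prop :=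
  exists s1 s2 : 'S_r,
    (forall s, (trop_value A f g s1 <= trop_value A f g s)%R) /\
    trop_value A f g s1 = trop_value A f g s2 /\
    (exists p q, sym_monomial f g s1 p q <> sym_monomial f g s2 p q).

Definition sym_trop_rank_is (n : nat) (A : 'M[Rdefinitions.R]_n) (r : nat) : Prop :=
  (exists f g : 'I_r -> 'I_n, injective f /\ injective g /\ ~ sym_trop_singular A f g) /\
  (forall (k : nat) (f g : 'I_k -> 'I_n), injective f -> injective g ->
      ~ sym_trop_singular A f g -> leq k r).

(* Write g_i = A_ii / 2 and e_ij = A_ij - g_i - g_j.  Up to the common term
   2 (g_0 + g_1 + g_2), the five symmetric monomials of a symmetric 3 x 3 matrix
   (the diagonal D, the transpositions T_i fixing i and the two 3-cycles C) have
   tropical values 0, 2 e_12, 2 e_02, 2 e_01 and e_01 + e_02 + e_12.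

   Lower bounds come from leading terms: if an r x r submatrix is tropically
   nonsingular, the terms of its Leibniz expansion of least t-degree are the
   permutations with the minimal monomial, and for r = 2, or for the whole
   symmetric 3 x 3 matrix, these all carry the same leading coefficient, so the
   minor of every lift is nonzero.

   Upper bounds come from explicit lifts F G, with F of size 3 x r and G of size
   r x 3, built from formal powers t^e.  When all principal 2 x 2 submatrices
   are singular, A_ij = g_i + g_j and t^(g_i) t^(g_j) has rank one.  When the
   whole matrix is singular its minimum is attained by two of the five
   monomials; up to a simultaneous permutation of rows and columns this is
   D = T_0, T_0 = T_1 or T_0 = C, and each case has a rank-two factorisation. *)
From mathcomp Require Import all_boot all_order all_algebra all_fingroup.
From mathcomp Require Import complex boolp classical_sets fsbigop reals Rstruct.
From Stdlib Require Import Rdefinitions.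
From mathcomp Require Import finmap.
From mathcomp.multinomials Require Import monalg.
From mathcomp Require Import ring lra.
From Stdlib Require Import Classical.

Set Implicit Arguments.
Unset Strict Implicit.
Unset Printing Implicit Defensive.
Import Order.TTheory GRing.Theory Num.Theory.
Local Open Scope classical_set_scope.
Local Open Scope ring_scope.

Notation RR := Rdefinitions.R.

(** * Hahn series with finite support *)

Lemma hmul_seqE (a b : series) (s : seq RR) x :
  uniq s -> supp a `<=` [set` s] ->
  hmul a b x = \sum_(y <- s) a y * b (x - y).
Proof.
move=> s_uniq a_s; rewrite /hmul (fsbig_fwiden s) //.
- by move=> y [/a_s].
- move=> y [_ /= /not_andP [/negP/negPn/eqP ->|/negP/negPn/eqP ->]];
  by rewrite ?mul0r ?mulr0.
Qed.

Lemma hmul1l b : hmul hone b = b.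
Proof.
apply: funext => x; rewrite (@hmul_seqE _ _ [:: 0]) ?big_seq1 ?subr0 /hone ?eqxx ?mul1r //.
by move=> y; rewrite /supp /hone /= mem_seq1; case: ifP => // _; rewrite eqxx.
Qed.

Lemma is_hahn_seq (a : series) (s : seq RR) : supp a `<=` [set` s] -> is_hahn a.
Proof.
move=> a_s S S_a [x Sx].
have S_s z : S z -> z \in s by move=> /S_a /a_s.
have [m Sm m_min] := @arg_minP _ _ (seq_sub s) (SeqSub (S_s x Sx))
  (fun i => `[< S (val i) >]) val (asboolT Sx).
exists (val m); split=> [|z Sz]; first exact/asboolP.
by apply/RleP; apply: (m_min (SeqSub (S_s z Sz))); apply/asboolP.
Qed.

Section WeightedSeries.
Variables (K : conomType) (w : K -> RR).
Hypothesis w1 : w mone = 0.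
Hypothesis wM : {morph w : m1 m2 / mmul m1 m2 >-> m1 + m2}.

Definition to_series (p : {malg CC[K]}) : series :=
  fun x => mmap idfun (fun m => (w m == x)%:R) p.

Lemma to_seriesE p x : to_series p x = \sum_(m <- msupp p) p@_m * (w m == x)%:R.
Proof. exact: mmapE. Qed.

Lemma to_seriesU c m : to_series << c *g m >> = fun x => c * (w m == x)%:R.
Proof. by apply: funext => x; rewrite /to_series mmapU. Qed.

Lemma to_seriesD p q : to_series (p + q) = hadd (to_series p) (to_series q).
Proof. by apply: funext => x; rewrite /to_series mmapD. Qed.

Lemma to_seriesN p : to_series (- p) = hopp (to_series p).
Proof. by apply: funext => x; rewrite /to_series mmapN. Qed.

Lemma to_series0 : to_series 0 = hzero.
Proof. by apply: funext => x; rewrite /to_series mmap0. Qed.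

Lemma to_series1 : to_series 1 = hone.
Proof.
rewrite [1]/(<< mone >>) to_seriesU w1; apply: funext => x.
by rewrite mul1r /hone eq_sym; case: eqP.
Qed.

Lemma supp_to_series p : supp (to_series p) `<=` [set` undup [seq w m | m <- msupp p]].
Proof.
move=> x; rewrite /supp /= to_seriesE mem_undup; apply: contraNT => x_w.
rewrite big_seq big1 // => m m_p.
by case: eqP x_w => [<-|]; rewrite ?map_f ?mulr0.
Qed.

Lemma to_seriesM p q : to_series (p * q) = hmul (to_series p) (to_series q).
Proof.
apply: funext => x; rewrite (hmul_seqE _ _ (undup_uniq _) (@supp_to_series p)).
rewrite /to_series malgME raddf_sum /=.
under [RHS]eq_bigr => y _ do rewrite mmapE mulr_suml.
rewrite [RHS]exchange_big; apply: eq_big_seq => m1 m1_p.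
rewrite (bigD1_seq (w m1)) ?undup_uniq ?mem_undup ?map_f //= eqxx mulr1.
rewrite [X in _ + X]big1 ?addr0 => [|y /negbTE y_m1];
  last by rewrite eq_sym y_m1 mulr0 mul0r.
rewrite raddf_sum mmapE mulr_sumr; apply: eq_bigr => m2 _ /=.
by rewrite mmapU wM /= mulrA [(w m2 == _)]eq_sym subr_eq addrC eq_sym.
Qed.

Lemma is_hahn_to_series p : is_hahn (to_series p).
Proof. exact: is_hahn_seq (@supp_to_series p). Qed.

Lemma minor_to_series n k (M : 'I_n -> 'I_n -> {malg CC[K]}) (f g : 'I_k -> 'I_n) :
  minor (fun i j => to_series (M i j)) f g =
  to_series (\det (\matrix_(i, j) M (f i) (g j))).
Proof.
rewrite /minor /determinant [RHS](big_morph _ to_seriesD to_series0).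
apply: eq_bigr => s _; rewrite -(big_morph _ to_seriesM to_series1).
under [in RHS]eq_bigr do rewrite mxE.
by case: (odd_perm s); rewrite /= ?expr1 ?expr0 ?mulN1r ?mul1r ?to_seriesN.
Qed.

End WeightedSeries.

(* The formal power t^e is the variable indexed by e of the free commutative
   monoid algebra over the reals; [weight] adds up the exponents of a monomial,
   so [tseries] identifies t^e t^e' with t^(e + e') only on the series side. *)
Definition weight (m : cmonom RR) : RR := \sum_(e <- finsupp m) (m e)%:R * e.

Lemma weightEw (m : cmonom RR) (d : {fset RR}) : (finsupp m `<=` d)%fset ->
  weight m = \sum_(e <- d) (m e)%:R * e.
Proof.
move=> m_d; rewrite /weight (big_fset_incl _ m_d) // => e _.
by rewrite -cmE_neq0 negbK => /eqP ->; rewrite mul0r.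
Qed.

Lemma weight1 : weight mone = 0.
Proof. by rewrite /weight mdom1 big_seq_fset0. Qed.

Lemma weightM : {morph weight : m1 m2 / mmul m1 m2 >-> m1 + m2}.
Proof.
move=> m1 m2; rewrite (@weightEw m1 _ (fsubsetUl _ (finsupp m2))).
rewrite (@weightEw m2 _ (fsubsetUr (finsupp m1) _)) -big_split /weight mdomD /=.
by apply: eq_bigr => e _; rewrite cmM natrD mulrDl.
Qed.

Lemma weightU e : weight (ucm e) = e.
Proof. by rewrite /weight mdomU big_seq_fset1 cmUU mul1r. Qed.

Definition tpow (e : RR) : {malg CC[cmonom RR]} := << ucm e >>.

Notation tseries := (to_series weight).

Lemma tseries_tpowK e : tseries (tpow e * tpow (- e)) = hone.
Proof.
rewrite /tpow malgM_def fgmulUU mulr1 to_seriesU weightM !weightU addrN.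
by apply: funext => x; rewrite mul1r /hone eq_sym; case: eqP.
Qed.

Lemma tseries_tpowN e p r : tseries (p + tpow e * tpow (- e) * r - r) = tseries p.
Proof.
rewrite !to_seriesD to_seriesN (to_seriesM weightM) tseries_tpowK hmul1l.
by apply: funext => x; rewrite /hadd /hopp addrK.
Qed.

Definition tsum (l : seq (int * seq RR)) : {malg CC[cmonom RR]} :=
  \sum_(q <- l) (\prod_(e <- q.2) tpow e) *~ q.1.

Definition tsum_coef (l : seq (int * seq RR)) x : int :=
  \sum_(q <- l) q.1 * (\sum_(e <- q.2) e == x)%:Z.

Lemma prod_tpow s : \prod_(e <- s) tpow e = << \big[mmul/mone]_(e <- s) ucm e >>.
Proof.
elim: s => [|e s IHs]; first by rewrite !big_nil.
by rewrite !big_cons IHs /tpow malgM_def fgmulUU mulr1; reflexivity.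
Qed.

Lemma tseries_tsum l x : tseries (tsum l) x = (tsum_coef l x)%:~R.
Proof.
rewrite /to_series /tsum /tsum_coef !raddf_sum /=; apply: eq_bigr => q _.
rewrite raddfMz /= prod_tpow mmapU mul1r (big_morph weight weightM weight1).
by under eq_bigr do rewrite weightU; rewrite intrM -mulrzl pmulrn mulrC.
Qed.

Lemma has_deg_tsum l d : tsum_coef l d != 0 ->
  (forall x, x < d -> tsum_coef l x = 0) -> has_deg (tseries (tsum l)) d.
Proof.
move=> l_d l_lt; split=> [|x /RltP x_lt]; rewrite tseries_tsum ?intr_eq0 //.
by rewrite l_lt.
Qed.

Ltac decide_exponents :=
  rewrite /tsum_coef /= ?big_cons ?big_nil ?RplusE ?RoppE /=;
  repeat match goal with
  | |- context [?a == ?b] =>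
      let Ta := type of a in unify Ta RR;
      first [ rewrite (_ : a == b = true); last by apply/eqP; lra
            | rewrite (_ : a == b = false); last by apply/negbTE/eqP => ?; lra
            | case: (ltgtP a b) => ? ]
  end;
  first [ done | exfalso; lra ].

(* [ring] is very slow when the atoms t^e are left in place. *)
Ltac ring_tpow :=
  repeat match goal with |- context [tpow ?e] => move: (tpow e) => ? end; ring.

(** * Leading terms of minors *)

Definition vanishes_below (a : series) (v : RR) := forall x, x < v -> a x = 0.
Arguments vanishes_below a v%_ring_scope.

Lemma has_deg_vanishes_below a d : has_deg a d -> vanishes_below a d.
Proof. by move=> [_ a_d] x /RltP /a_d. Qed.

Lemma hmul_vanishes_below a b u v : vanishes_below a u -> vanishes_below b v ->
  vanishes_below (hmul a b) (u + v) /\ hmul a b (u + v) = a u * b v.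
Proof.
move=> a_u b_v.
have supp_ge x y : a y != 0 -> b (x - y) != 0 -> u <= y /\ v <= x - y.
  move=> ay bxy; rewrite !leNgt; split; apply/negP.
    by move/a_u/eqP; apply/negP.
  by move/b_v/eqP; apply/negP.
split=> [x x_lt|].
  rewrite /hmul fsbig1 // => y [/supp_ge] /[apply] -[uy vy]; exfalso; lra.
have uvu : ((u + v) - u)%R = v by rewrite RminusE RplusE; ring.
rewrite /hmul (fsbig_widen _ [set u]) ?fsbig_set1 ?uvu.
- reflexivity.
- move=> y [/supp_ge] /[apply] -[uy]; rewrite ?RminusE ?RplusE => vy /=; lra.
- move=> y [/= -> /not_andP]; rewrite /= uvu.
  by case=> /negP/negPn/eqP ->; rewrite ?mul0r ?mulr0.
Qed.

Lemma hone_vanishes_below : vanishes_below hone 0 /\ hone 0 = 1.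
Proof.
split=> [x x_lt0|]; last by rewrite /hone eqxx.
by rewrite /hone; case: eqP x_lt0 => [->|//]; rewrite ltxx.
Qed.

Lemma hprod_vanishes_below (I : Type) (r : seq I) (F : I -> series) (d : I -> RR) :
  (forall i, vanishes_below (F i) (d i)) ->
  vanishes_below (\big[hmul/hone]_(i <- r) F i) (\sum_(i <- r) d i) /\
  (\big[hmul/hone]_(i <- r) F i) (\sum_(i <- r) d i) = \prod_(i <- r) F i (d i).
Proof.
move=> F_d; elim: r => [|i r [IHr IHr_val]].
  by rewrite !big_nil; exact: hone_vanishes_below.
rewrite !big_cons; have [prod_d prod_val] := hmul_vanishes_below (F_d i) IHr.
by split=> //; rewrite prod_val IHr_val.
Qed.

Lemma hsum_eval (I : Type) (r : seq I) (P : pred I) (G : I -> series) x :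
  (\big[hadd/hzero]_(i <- r | P i) G i) x = \sum_(i <- r | P i) G i x.
Proof. by apply: (big_morph (fun a : series => a x)). Qed.

Section LeadingTerm.
Variables (n k : nat) (A : 'M[RR]_n) (L : 'I_n -> 'I_n -> series) (f g : 'I_k -> 'I_n).
Hypothesis L_deg : forall i j, has_deg (L i j) (A i j).

Definition leibniz_term (s : 'S_k) : series :=
  (if odd_perm s then hopp else id) (\big[hmul/hone]_(i < k) L (f i) (g (s i))).

Definition lead_term (s : 'S_k) : CC :=
  (-1) ^+ s * \prod_(i < k) L (f i) (g (s i)) (A (f i) (g (s i))).

Lemma leibniz_term_lead s :
  vanishes_below (leibniz_term s) (trop_value A f g s) /\
  leibniz_term s (trop_value A f g s) = lead_term s.
Proof.
have [below val] := hprod_vanishes_below (index_enum 'I_k)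
  (F := fun i => L (f i) (g (s i))) (d := fun i => A (f i) (g (s i)))
  (fun i => has_deg_vanishes_below (L_deg (f i) (g (s i)))).
rewrite /leibniz_term /lead_term /trop_value.
case: (odd_perm s) => /=; split=> [x /below|];
  by rewrite /hopp ?val ?expr0 ?mul1r ?expr1 ?mulN1r // => ->; rewrite ?oppr0.
Qed.

Lemma lead_term_neq0 s : lead_term s != 0.
Proof.
rewrite mulf_eq0 signr_eq0 /= prodf_seq_eq0; apply/hasPn => i _ /=.
by have [] := L_deg (f i) (g (s i)).
Qed.

Lemma minor_neq0 (s1 : 'S_k) :
  (forall s, trop_value A f g s1 <= trop_value A f g s) ->
  (forall s, trop_value A f g s = trop_value A f g s1 -> lead_term s = lead_term s1) ->
  minor L f g <> hzero.
Proof.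
move=> s1_min s1_lead; set m := trop_value A f g s1.
move=> /(congr1 (fun a : series => a m)); rewrite /minor hsum_eval /hzero.
have term_m s : leibniz_term s m = (trop_value A f g s == m)%:R * lead_term s1.
  have [below val] := leibniz_term_lead s.
  case: eqP => [s_m|/eqP s_m]; first by rewrite -s_m val s1_lead // mul1r.
  by rewrite mul0r below // lt_neqAle eq_sym s_m s1_min.
rewrite (eq_bigr _ (fun s _ => term_m s)) -mulr_suml -natr_sum => /eqP.
by rewrite mulf_eq0 (negbTE (lead_term_neq0 s1)) orbF pnatr_eq0 (bigD1 s1) //= eqxx.
Qed.

End LeadingTerm.

Lemma argmin_perm n k (A : 'M[RR]_n) (f g : 'I_k -> 'I_n) :
  exists s1 : 'S_k, forall s, trop_value A f g s1 <= trop_value A f g s.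
Proof.
have [s1 _ s1_min] := @arg_minP _ _ _ 1%g xpredT (trop_value A f g) isT.
by exists s1 => s; apply: s1_min.
Qed.

Lemma nonsingular_minor_neq0 n k (A : 'M[RR]_n) L (f g : 'I_k -> 'I_n) :
  (forall i j, has_deg (L i j) (A i j)) -> ~ sym_trop_singular A f g ->
  (forall s s', (forall p q, sym_monomial f g s p q = sym_monomial f g s' p q) ->
     lead_term A L f g s = lead_term A L f g s') ->
  minor L f g <> hzero.
Proof.
move=> L_deg A_ns lead_mono; have [s1 s1_min] := argmin_perm A f g.
apply: (minor_neq0 L_deg s1_min) => s s_s1; apply: lead_mono => p q.
apply: contra_notP A_ns => mono_ne; exists s1, s; split=> [t|]; first exact/RleP.
by split=> //; exists p, q => mono_eq; apply: mono_ne.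
Qed.

(** * Symmetric lifts of low rank *)

Definition lift_rank_le n (A : 'M[RR]_n) r := exists2 L, sym_lift A L &
  forall k (f g : 'I_k -> 'I_n), (r < k)%nat -> minor L f g = hzero.

Lemma det_mul_lt (R : comNzRingType) k r (F : 'M[R]_(k, r)) (G : 'M[R]_(r, k)) :
  (r < k)%nat -> \det (F *m G) = 0.
Proof.
move=> /subnKC; rewrite addSnnS; move: (k - r.+1)%nat => d ek.
case: k / ek F G => F G.
have -> : F *m G = row_mx F 0 *m col_mx G (0 : 'M_(d.+1, r + d.+1)).
  by rewrite mul_row_col mul0mx addr0.
rewrite det_mulmx (expand_det_col _ (rshift r ord0)) big1 ?mul0r // => i _.
by rewrite row_mxEr mxE mul0r.
Qed.

Lemma factored_lift n r (A : 'M[RR]_n) (E : 'I_n -> 'I_n -> {malg CC[cmonom RR]})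
    (F : 'M_(n, r)) (G : 'M_(r, n)) :
  (forall i j, tseries (E i j) = tseries ((F *m G) i j)) ->
  (forall i j, E i j = E j i) ->
  (forall i j, has_deg (tseries (E i j)) (A i j)) ->
  lift_rank_le A r.
Proof.
move=> E_FG E_sym E_deg; exists (fun i j => tseries (E i j)).
  split=> [i j|]; first by rewrite E_sym.
  split=> [i j|]; first exact: is_hahn_to_series.
  split=> // i j E0; have [] := E_deg i j.
  by rewrite E0 /hzero eqxx.
move=> k f g r_k; have -> : (fun i j => tseries (E i j)) = fun i j => tseries ((F *m G) i j).
  by apply: funext => i; apply: funext => j.
rewrite (minor_to_series weight1 weightM).
have -> : \matrix_(i, j) (F *m G) (f i) (g j) =
          (\matrix_(i, l) F (f i) l) *m (\matrix_(l, j) G l (g j)).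
  by apply/matrixP => i j; rewrite !mxE; apply: eq_bigr => l _; rewrite !mxE.
by rewrite det_mul_lt // to_series0.
Qed.

Lemma lift_rank1 n (A : 'M[RR]_n) : (forall i j, A i j = A i i / 2 + A j j / 2) ->
  lift_rank_le A 1.
Proof.
move=> A_rank1; pose E i j := tsum [:: (1, [:: A i i / 2; A j j / 2])].
pose F : 'M_(n, 1) := \matrix_(i, k) tpow (A i i / 2).
apply: (@factored_lift _ _ _ E F F^T).
- move=> i j; congr tseries; rewrite !mxE big_ord1 !mxE /E /tsum !big_cons !big_nil /=.
  by ring_tpow.
- by move=> i j; rewrite /E /tsum !big_cons !big_nil /=; ring_tpow.
- move=> i j; rewrite (A_rank1 i j) /E.
  by apply: has_deg_tsum => [|x x_lt]; decide_exponents.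
Qed.

Definition o0 : 'I_3 := @Ordinal 3 0 isT.
Definition o1 : 'I_3 := @Ordinal 3 1 isT.
Definition o2 : 'I_3 := @Ordinal 3 2 isT.

Lemma ord3P (i : 'I_3) : [\/ i = o0, i = o1 | i = o2].
Proof.
by case: i => [[|[|[|?]]] ?] //; [apply: Or31 | apply: Or32 | apply: Or33]; apply: val_inj.
Qed.

Definition mx_of_rows (T : nmodType) {m n} (rows : seq (seq T)) : 'M[T]_(m, n) :=
  \matrix_(i, j) (nth [::] rows i)`_j.

Definition sym_mx3 (T : nmodType) (a00 a01 a02 a11 a12 a22 : T) : 'M[T]_3 :=
  mx_of_rows [:: [:: a00; a01; a02]; [:: a01; a11; a12]; [:: a02; a12; a22]].

Lemma sym_mx3_sym (T : nmodType) (a00 a01 a02 a11 a12 a22 : T) i j :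
  sym_mx3 a00 a01 a02 a11 a12 a22 i j = sym_mx3 a00 a01 a02 a11 a12 a22 j i.
Proof. by rewrite !mxE; case: (ord3P i) => ->; case: (ord3P j) => ->. Qed.

Definition sym_mx_exc (g0 g1 g2 e01 e02 e12 : RR) : 'M[RR]_3 :=
  sym_mx3 (g0 + g0) (g0 + g1 + e01) (g0 + g2 + e02) (g1 + g1) (g1 + g2 + e12) (g2 + g2).
Arguments sym_mx_exc (g0 g1 g2 e01 e02 e12)%_ring_scope.

Ltac lift_degrees :=
  let i := fresh "i" in let j := fresh "j" in
  move=> i j; case: (ord3P i) => ->; case: (ord3P j) => ->; rewrite !mxE /=;
  apply: has_deg_tsum => [|x x_lt]; decide_exponents.

Lemma lift_DT g0 g1 g2 e01 e02 : 0 <= e01 -> 0 <= e02 ->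
  lift_rank_le (sym_mx_exc g0 g1 g2 e01 e02 0) 2.
Proof.
move=> e01_ge0 e02_ge0.
pose E := sym_mx3 (tsum [:: (1, [:: g0; g0; e01; e01]); (1, [:: g0; g0])])
  (tsum [:: (1, [:: g0; g1; e01])]) (tsum [:: (1, [:: g0; g2; e02])])
  (tsum [:: (1, [:: g1; g1])]) (tsum [:: (1, [:: g1; g2])])
  (tsum [:: (1, [:: g2; g2]); (1, [:: g2; g2; e02; e02]); (-2, [:: g2; g2; e02; e01]);
            (1, [:: g2; g2; e01; e01])]).
pose F : 'M_(3, 2) := mx_of_rows [:: [:: tpow g0 * tpow e01; tpow g0]; [:: tpow g1; 0];
  [:: tpow g2; tpow g2 * (tpow e02 - tpow e01)]].
apply: (@factored_lift _ _ _ E F F^T); last first.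
- lift_degrees.
- by move=> i j; exact: sym_mx3_sym.
- move=> i j; congr tseries; rewrite !mxE !big_ord_recl big_ord0 !mxE.
  case: (ord3P i) => ->; case: (ord3P j) => ->; rewrite /= /tsum !big_cons !big_nil /=.
  all: ring_tpow.
Qed.

Lemma lift_TT g0 g1 g2 e01 e : e <= 0 -> 0 <= e01 ->
  lift_rank_le (sym_mx_exc g0 g1 g2 e01 e e) 2.
Proof.
rewrite le_eqVlt => /orP[/eqP -> e01_ge0|e_lt0 e01_ge0]; first exact: lift_DT.
pose E := sym_mx3 (tsum [:: (1, [:: g0; g0])]) (tsum [:: (1, [:: g0; g1; e01])])
  (tsum [:: (1, [:: g0; g2; e])])
  (tsum [:: (-1, [:: g1; g1]); (2, [:: g1; g1; e01]); (1, [:: g1; g1; - e; - e]);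
            (-2, [:: g1; g1; e01; - e; - e]); (1, [:: g1; g1; e01; e01; - e; - e])])
  (tsum [:: (1, [:: g1; g2; e]); (-1, [:: g1; g2; - e]); (1, [:: g1; g2; e01; - e])])
  (tsum [:: (1, [:: g2; g2])]).
pose b' := tpow e01 * tpow (- e) - tpow (- e).
pose F : 'M_(3, 2) := mx_of_rows [:: [:: tpow g0; 0]; [:: tpow g1; tpow g1 * b'];
  [:: 0; tpow g2]].
pose G : 'M_(2, 3) := mx_of_rows
  [:: [:: tpow g0; (1 + tpow e * b') * tpow g1; tpow e * tpow g2];
      [:: tpow e * tpow g0; (tpow e + b') * tpow g1; tpow g2]].
(* F G equals E only up to t^e t^(-e) = 1; K is the cofactor of t^e t^(-e) - 1. *)
pose K := sym_mx3 0 ((tpow e01 - 1) * tpow g0 * tpow g1) 0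
  (2 * (tpow e01 - 1) * tpow g1 * tpow g1) 0 0.
apply: (@factored_lift _ _ _ E F G); last first.
- lift_degrees.
- by move=> i j; exact: sym_mx3_sym.
- move=> i j; rewrite -(tseries_tpowN e (E i j) (K i j)); congr tseries.
  rewrite !mxE !big_ord_recl big_ord0 !mxE.
  case: (ord3P i) => ->; case: (ord3P j) => ->; rewrite /= /tsum !big_cons !big_nil /= /b'.
  all: ring_tpow.
Qed.

Lemma lift_TC g0 g1 g2 e01 e02 : e01 <= 0 -> e02 <= 0 ->
  lift_rank_le (sym_mx_exc g0 g1 g2 e01 e02 (e01 + e02)) 2.
Proof.
move=> e01_le0 e02_le0.
pose E := sym_mx3
  (tsum [:: (1, [:: g0; g0; - e01; - e01]); (2, [:: g0; g0; - e01; - e02; e01 + e02]);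
            (1, [:: g0; g0; - e02; - e02])])
  (tsum [:: (1, [:: g0; g1; - e01]); (1, [:: g0; g1; - e02; e01 + e02])])
  (tsum [:: (1, [:: g0; g2; - e01; e01 + e02]); (1, [:: g0; g2; - e02])])
  (tsum [:: (1, [:: g1; g1])]) (tsum [:: (1, [:: g1; g2; e01 + e02])])
  (tsum [:: (1, [:: g2; g2])]).
pose F : 'M_(3, 2) := mx_of_rows
  [:: [:: tpow g0 * tpow (- e01); tpow g0 * tpow (- e02)]; [:: tpow g1; 0]; [:: 0; tpow g2]].
pose G : 'M_(2, 3) := mx_of_rows
  [:: [:: (tpow (- e01) + tpow (e01 + e02) * tpow (- e02)) * tpow g0; tpow g1;
          tpow (e01 + e02) * tpow g2];
      [:: (tpow (e01 + e02) * tpow (- e01) + tpow (- e02)) * tpow g0;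
          tpow (e01 + e02) * tpow g1; tpow g2]].
apply: (@factored_lift _ _ _ E F G); last first.
- lift_degrees.
- by move=> i j; exact: sym_mx3_sym.
- move=> i j; congr tseries; rewrite !mxE !big_ord_recl big_ord0 !mxE.
  case: (ord3P i) => ->; case: (ord3P j) => ->; rewrite /= /tsum !big_cons !big_nil /=.
  all: ring_tpow.
Qed.

Definition excess n (A : 'M[RR]_n) i j := A i j - A i i / 2 - A j j / 2.

Lemma sym_mx_excE (A : 'M[RR]_3) : (forall i j, A i j = A j i) ->
  A = sym_mx_exc (A o0 o0 / 2) (A o1 o1 / 2) (A o2 o2 / 2)
        (excess A o0 o1) (excess A o0 o2) (excess A o1 o2).
Proof.
move=> A_sym; apply/matrixP => i j; rewrite !mxE /excess.
have := A_sym o0 o1; have := A_sym o0 o2; have := A_sym o1 o2.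
by case: (ord3P i) => ->; case: (ord3P j) => -> /=; lra.
Qed.

Lemma lift_rank_le_conj n (A : 'M[RR]_n) (s : 'S_n) r :
  lift_rank_le (\matrix_(i, j) A (s i) (s j)) r -> lift_rank_le A r.
Proof.
case=> L [L_sym [L_hahn [L_nz L_deg]]] L_minor.
exists (fun i j => L (s^-1 i) (s^-1 j))%g.
  split=> [i j|]; first exact: L_sym.
  split=> [i j|]; first exact: L_hahn.
  split=> [i j|i j]; first exact: L_nz.
  by have := L_deg (s^-1 i)%g (s^-1 j)%g; rewrite mxE !permKV.
by move=> k f g r_k; exact: (L_minor k (fun i => s^-1 (f i))%g (fun i => s^-1 (g i))%g).
Qed.

Section ConjugateLifts.
Variables (A : 'M[RR]_3) (s : 'S_3).
Hypothesis A_sym : forall i j, A i j = A j i.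
Let As := \matrix_(i, j) A (s i) (s j).

Let As_sym i j : As i j = As j i.
Proof. by rewrite !mxE A_sym. Qed.

Let excess_As i j : excess As i j = excess A (s i) (s j).
Proof. by rewrite /excess !mxE. Qed.

Lemma lift_DT_conj : excess A (s o1) (s o2) = 0 ->
  0 <= excess A (s o0) (s o1) -> 0 <= excess A (s o0) (s o2) -> lift_rank_le A 2.
Proof.
move=> e12 e01 e02; apply: (lift_rank_le_conj (s := s)); rewrite -/As.
by rewrite (sym_mx_excE As_sym) !excess_As e12; apply: lift_DT.
Qed.

Lemma lift_TT_conj : excess A (s o1) (s o2) = excess A (s o0) (s o2) ->
  excess A (s o0) (s o2) <= 0 -> 0 <= excess A (s o0) (s o1) -> lift_rank_le A 2.
Proof.
move=> e12 e02 e01; apply: (lift_rank_le_conj (s := s)); rewrite -/As.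
by rewrite (sym_mx_excE As_sym) !excess_As e12; apply: lift_TT.
Qed.

Lemma lift_TC_conj :
  excess A (s o1) (s o2) = excess A (s o0) (s o1) + excess A (s o0) (s o2) ->
  excess A (s o0) (s o1) <= 0 -> excess A (s o0) (s o2) <= 0 -> lift_rank_le A 2.
Proof.
move=> e12 e01 e02; apply: (lift_rank_le_conj (s := s)); rewrite -/As.
by rewrite (sym_mx_excE As_sym) !excess_As e12; apply: lift_TC.
Qed.

End ConjugateLifts.

(** * Symmetric tropical singularity *)

Lemma card_classic_set (T : finType) (P : pred T) :
  #|[set i | P i]%classic| = #|[set i | P i]%SET|.
Proof.
by apply: eq_card => i; rewrite finset.in_set; apply/idP/idP => [/set_mem|/mem_set].
Qed.

Lemma sym_monomialV n (s : 'S_n) p q :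
  sym_monomial id id s^-1 p q = sym_monomial id id s p q.
Proof.
rewrite /sym_monomial !card_classic_set -(card_preimset _ (@perm_inj _ s)).
apply: eq_card => j; rewrite !finset.in_set /= permK.
by rewrite orbC [(j == q) && _]andbC [(j == p) && _]andbC.
Qed.

Lemma sym_monomial_diag n (s : 'S_n) p : sym_monomial id id s p p = (s p == p).
Proof.
rewrite /sym_monomial card_classic_set.
under eq_finset => i do rewrite orbb.
have [sp|sp] := eqP.
  rewrite (_ : [set i | _]%SET = [set p]%SET) ?cards1 //.
  by apply/setP => i; rewrite !inE; case: eqP => // ->; rewrite sp eqxx.
rewrite (_ : [set i | _]%SET = finset.set0) ?cards0 //.
by apply/setP => i; rewrite !inE; case: eqP => // ->; rewrite (introF eqP sp).
Qed.

Lemma trop_valueV n (A : 'M[RR]_n) : (forall i j, A i j = A j i) ->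
  forall s : 'S_n, trop_value A id id (s^-1)%g = trop_value A id id s.
Proof.
move=> A_sym s; rewrite /trop_value (reindex_inj (@perm_inj _ s)) /=.
by apply: eq_bigr => i _; rewrite permK A_sym.
Qed.

Lemma sym_trop_singular_id n (A : 'M[RR]_n) : sym_trop_singular A id id ->
  exists s1 s2 : 'S_n, [/\ forall s, trop_value A id id s1 <= trop_value A id id s,
    trop_value A id id s1 = trop_value A id id s2, s2 != s1 & s2 != s1^-1]%g.
Proof.
move=> [s1 [s2 [s1_min [s12 [p [q mono_ne]]]]]]; exists s1, s2; split=> //.
- by move=> s; apply/RleP.
- by apply: contra_notN mono_ne => /eqP ->.
- by apply: contra_notN mono_ne => /eqP ->; rewrite sym_monomialV.
Qed.

Section Transfer.
Variables (n : nat) (A : 'M[RR]_n) (f g : 'I_n -> 'I_n).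
Hypotheses (f_inj : injective f) (g_inj : injective g).
Let F : 'S_n := perm f_inj.
Let G : 'S_n := perm g_inj.
Let conj_perm (s : 'S_n) : 'S_n := (F^-1 * s * G)%g.

Let conj_permE s j : conj_perm s j = g (s (F^-1 j))%g.
Proof. by rewrite /conj_perm !permM permE. Qed.

Let conj_permK t : conj_perm (F * t * G^-1)%g = t.
Proof. by rewrite /conj_perm !mulgA mulVg mul1g mulgKV. Qed.

Let trop_value_conj s : trop_value A f g s = trop_value A id id (conj_perm s).
Proof.
rewrite /trop_value [RHS](reindex_inj (@perm_inj _ F)); apply: eq_bigr => i _.
by rewrite /= conj_permE permK permE.
Qed.

Let sym_monomial_conj s p q :
  sym_monomial f g s p q = sym_monomial id id (conj_perm s) p q.
Proof.
rewrite /sym_monomial !card_classic_set -[RHS](card_preimset _ (@perm_inj _ F)).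
by apply: eq_card => i; rewrite !finset.in_set /= conj_permE permK permE.
Qed.

Lemma sym_trop_singular_transfer :
  sym_trop_singular A id id -> sym_trop_singular A f g.
Proof.
move=> [t1 [t2 [t1_min [t12 [p [q mono_ne]]]]]].
exists (F * t1 * G^-1)%g, (F * t2 * G^-1)%g; split; last split.
- by move=> s; rewrite !trop_value_conj conj_permK.
- by rewrite !trop_value_conj !conj_permK.
- by exists p, q; rewrite !sym_monomial_conj !conj_permK.
Qed.

End Transfer.

Definition t01 : 'S_3 := tperm o0 o1.
Definition t02 : 'S_3 := tperm o0 o2.
Definition t12 : 'S_3 := tperm o1 o2.
Definition c012 : 'S_3 := (t01 * t02)%g.

Lemma perm3E :
  (t01 o0 = o1) * (t01 o1 = o0) * (t01 o2 = o2) * (t02 o0 = o2) * (t02 o1 = o1) *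
  (t02 o2 = o0) * (t12 o0 = o0) * (t12 o1 = o2) * (t12 o2 = o1) * (c012 o0 = o1) *
  (c012 o1 = o2) * (c012 o2 = o0).
Proof. by rewrite /c012 !permM /t01 /t02 /t12 !(tpermL, tpermR, tpermD). Qed.

Lemma c012V : ((c012^-1)%g o0 = o2) * ((c012^-1)%g o1 = o0) * ((c012^-1)%g o2 = o1).
Proof. by do !split; apply: (canLR (permK c012)); rewrite perm3E. Qed.

Lemma perm3_cases (s : 'S_3) :
  (s o0 = o0 /\ s o1 = o1 /\ s o2 = o2) \/ (s o0 = o0 /\ s o1 = o2 /\ s o2 = o1) \/
  (s o0 = o2 /\ s o1 = o1 /\ s o2 = o0) \/ (s o0 = o1 /\ s o1 = o0 /\ s o2 = o2) \/
  (s o0 = o1 /\ s o1 = o2 /\ s o2 = o0) \/ (s o0 = o2 /\ s o1 = o0 /\ s o2 = o1).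
Proof.
have s_inj i j : i != j -> s i != s j by rewrite (inj_eq perm_inj).
have /s_inj := isT : o0 != o1; have /s_inj := isT : o0 != o2; have /s_inj := isT : o1 != o2.
by case: (ord3P (s o0)) => ->; case: (ord3P (s o1)) => ->; case: (ord3P (s o2)) => -> //;
  move=> _ _ _; tauto.
Qed.

Lemma perm3_enum (s : 'S_3) :
  s = 1%g \/ s = t12 \/ s = t02 \/ s = t01 \/ s = c012 \/ s = (c012^-1)%g.
Proof.
case: (perm3_cases s) => [[a0 [a1 a2]]|[[a0 [a1 a2]]|[[a0 [a1 a2]]|[[a0 [a1 a2]]|
  [[a0 [a1 a2]]|[a0 [a1 a2]]]]]]];
  [left | right; left | do 2 right; left | do 3 right; left | do 4 right; left | do 5 right];
  apply/permP => i; rewrite ?perm1; try apply: (canRL (permK c012));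
  by case: (ord3P i) => ->; rewrite ?a0 ?a1 ?a2 ?perm3E.
Qed.

Lemma sym_monomial3_eq (s s' : 'S_3) :
  (forall p q, sym_monomial id id s p q = sym_monomial id id s' p q) ->
  s' = s \/ s' = (s^-1)%g.
Proof.
move=> mono_eq; have := mono_eq o0 o0; have := mono_eq o1 o1; have := mono_eq o2 o2.
rewrite !sym_monomial_diag.
case: (perm3_enum s) => [|[|[|[|[|]]]]] ->; case: (perm3_enum s') => [|[|[|[|[|]]]]] ->;
  rewrite ?perm1 ?perm3E ?c012V ?invgK //=; by [left | right].
Qed.

Lemma sum_ord3 (F : 'I_3 -> RR) : \sum_(i < 3) F i = F o0 + F o1 + F o2.
Proof.
rewrite !big_ord_recr big_ord0 /=.
have -> : widen_ord (leqnSn 2) (widen_ord (leqnSn 1) ord_max) = o0 by apply: val_inj.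
have -> : widen_ord (leqnSn 2) ord_max = o1 by apply: val_inj.
have -> : ord_max = o2 by apply: val_inj.
lra.
Qed.

Section SymmetricThreeByThree.
Variable A : 'M[RR]_3.
Hypothesis A_sym : forall i j, A i j = A j i.
Local Notation V s := (trop_value A id id s).

Lemma trop_value_perm3 :
  [/\ V 1%g = A o0 o0 + A o1 o1 + A o2 o2, V t12 = A o0 o0 + A o1 o2 + A o1 o2,
      V t02 = A o1 o1 + A o0 o2 + A o0 o2, V t01 = A o2 o2 + A o0 o1 + A o0 o1
    & V c012 = A o0 o1 + A o1 o2 + A o0 o2].
Proof.
rewrite /trop_value !sum_ord3 /= !perm1 !perm3E.
have := A_sym o0 o1; have := A_sym o0 o2; have := A_sym o1 o2.
by split; lra.
Qed.

Ltac pair_arith e m :=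
  rewrite /excess ?perm1 ?perm3E; move: e (m 1%g) (m t12) (m t02) (m t01) (m c012);
  case: trop_value_perm3 => -> -> -> -> ->; have := A_sym o0 o1; have := A_sym o0 o2;
  have := A_sym o1 o2; lra.

(* In [lift_X_Y], the monomial X attains the minimum and Y attains it too, where
   D is the diagonal, T_i the transposition fixing i and C the 3-cycle. *)
Lemma lift_D_T0 : V 1%g = V t12 -> (forall s, V 1%g <= V s) -> lift_rank_le A 2.
Proof. by move=> e m; apply: (lift_DT_conj (s := 1%g) A_sym); pair_arith e m. Qed.

Lemma lift_D_T1 : V 1%g = V t02 -> (forall s, V 1%g <= V s) -> lift_rank_le A 2.
Proof. by move=> e m; apply: (lift_DT_conj (s := t01) A_sym); pair_arith e m. Qed.

Lemma lift_D_T2 : V 1%g = V t01 -> (forall s, V 1%g <= V s) -> lift_rank_le A 2.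
Proof. by move=> e m; apply: (lift_DT_conj (s := t02) A_sym); pair_arith e m. Qed.

Lemma lift_D_C : V 1%g = V c012 -> (forall s, V 1%g <= V s) -> lift_rank_le A 2.
Proof. by move=> e m; apply: (lift_DT_conj (s := 1%g) A_sym); pair_arith e m. Qed.

Lemma lift_T0_T1 : V t12 = V t02 -> (forall s, V t12 <= V s) -> lift_rank_le A 2.
Proof. by move=> e m; apply: (lift_TT_conj (s := 1%g) A_sym); pair_arith e m. Qed.

Lemma lift_T0_T2 : V t12 = V t01 -> (forall s, V t12 <= V s) -> lift_rank_le A 2.
Proof. by move=> e m; apply: (lift_TT_conj (s := t12) A_sym); pair_arith e m. Qed.

Lemma lift_T1_T2 : V t02 = V t01 -> (forall s, V t02 <= V s) -> lift_rank_le A 2.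
Proof. by move=> e m; apply: (lift_TT_conj (s := c012) A_sym); pair_arith e m. Qed.

Lemma lift_T0_C : V t12 = V c012 -> (forall s, V t12 <= V s) -> lift_rank_le A 2.
Proof. by move=> e m; apply: (lift_TC_conj (s := 1%g) A_sym); pair_arith e m. Qed.

Lemma lift_T1_C : V t02 = V c012 -> (forall s, V t02 <= V s) -> lift_rank_le A 2.
Proof. by move=> e m; apply: (lift_TC_conj (s := t01) A_sym); pair_arith e m. Qed.

Lemma lift_T2_C : V t01 = V c012 -> (forall s, V t01 <= V s) -> lift_rank_le A 2.
Proof. by move=> e m; apply: (lift_TC_conj (s := t02) A_sym); pair_arith e m. Qed.

Lemma lift_of_two_minima (s1 s2 : 'S_3) : (forall s, V s1 <= V s) -> V s1 = V s2 ->
  s2 != s1 -> s2 != (s1^-1)%g -> lift_rank_le A 2.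
Proof.
move=> s1_min s12 s21 s2V; have s2_min s : V s2 <= V s by rewrite -s12.
have Vc : V (c012^-1)%g = V c012 := trop_valueV A_sym c012.
case: (perm3_enum s1) => [|[|[|[|[|]]]]] e1; case: (perm3_enum s2) => [|[|[|[|[|]]]]] e2;
  subst s1 s2; rewrite ?Vc in s1_min s12 s2_min; move: s21 s2V; rewrite ?invgK ?eqxx // => _ _.
all: first
  [ exact: lift_D_T0 s12 s1_min | exact: lift_D_T0 (esym s12) s2_min
  | exact: lift_D_T1 s12 s1_min | exact: lift_D_T1 (esym s12) s2_min
  | exact: lift_D_T2 s12 s1_min | exact: lift_D_T2 (esym s12) s2_min
  | exact: lift_D_C s12 s1_min | exact: lift_D_C (esym s12) s2_min
  | exact: lift_T0_T1 s12 s1_min | exact: lift_T0_T1 (esym s12) s2_min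
  | exact: lift_T0_T2 s12 s1_min | exact: lift_T0_T2 (esym s12) s2_min
  | exact: lift_T1_T2 s12 s1_min | exact: lift_T1_T2 (esym s12) s2_min
  | exact: lift_T0_C s12 s1_min | exact: lift_T0_C (esym s12) s2_min
  | exact: lift_T1_C s12 s1_min | exact: lift_T1_C (esym s12) s2_min
  | exact: lift_T2_C s12 s1_min | exact: lift_T2_C (esym s12) s2_min ].
Qed.

End SymmetricThreeByThree.

Lemma lift_rank2_of_singular (A : 'M[RR]_3) : (forall i j, A i j = A j i) ->
  sym_trop_singular A id id -> lift_rank_le A 2.
Proof.
move=> A_sym /sym_trop_singular_id [s1 [s2 [s1_min s12 s21 s2V]]].
exact (lift_of_two_minima A_sym s1_min s12 s21 s2V).
Qed.

Lemma lead_termV n (A : 'M[RR]_n) (L : 'I_n -> 'I_n -> series) (s : 'S_n) :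
  (forall i j, L i j = L j i) -> (forall i j, A i j = A j i) ->
  lead_term A L id id (s^-1)%g = lead_term A L id id s.
Proof.
move=> L_sym A_sym; rewrite /lead_term odd_permV; congr (_ * _).
rewrite (reindex_inj (@perm_inj _ s)) /=; apply: eq_bigr => i _.
by rewrite permK L_sym A_sym.
Qed.

Lemma sym_lift3_minor_neq0 (A : 'M[RR]_3) L : (forall i j, A i j = A j i) ->
  sym_lift A L -> ~ sym_trop_singular A id id -> minor L id id <> hzero.
Proof.
move=> A_sym [L_sym [_ [_ L_deg]]] A_ns; apply: (nonsingular_minor_neq0 L_deg A_ns).
by move=> s s' /sym_monomial3_eq [->|->]; rewrite ?lead_termV.
Qed.

Lemma ord2P (i : 'I_2) : i = ord0 \/ i = ord_max.
Proof. by case: i => [[|[|?]] ?] //; [left | right]; apply: val_inj. Qed.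

Lemma ord2_other (a b c : 'I_2) : a != c -> b != c -> a = b.
Proof. by case: (ord2P a) => ->; case: (ord2P b) => ->; case: (ord2P c) => ->. Qed.

Lemma perm2_eq (s s' : 'S_2) : s ord0 = s' ord0 -> s = s'.
Proof.
move=> s0; apply/permP => i; case: (ord2P i) => -> //.
apply: (@ord2_other _ _ (s ord0)); first by rewrite (inj_eq perm_inj).
by rewrite s0 (inj_eq perm_inj).
Qed.

Lemma perm2_max (s : 'S_2) : s ord_max = if s ord0 == ord0 then ord_max else ord0.
Proof.
apply: (@ord2_other _ _ (s ord0)); first by rewrite (inj_eq perm_inj).
by case: (ord2P (s ord0)) => ->.
Qed.

Lemma sum_ord2 (F : 'I_2 -> RR) : \sum_(i < 2) F i = F ord0 + F ord_max.
Proof. by rewrite big_ord_recl big_ord1; congr (_ + F _); apply: val_inj. Qed.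

Lemma sym_monomial2_inj n (f g : 'I_2 -> 'I_n) (s s' : 'S_2) : injective f -> injective g ->
  (forall p q, sym_monomial f g s p q = sym_monomial f g s' p q) -> s = s'.
Proof.
move=> f_inj g_inj mono_eq; apply: perm2_eq; apply/eqP; apply: contraT => s0.
have s1 : s ord_max = s' ord0.
  by apply: (@ord2_other _ _ (s ord0)); rewrite ?(inj_eq perm_inj) // eq_sym.
have := mono_eq (f ord0) (g (s' ord0)); rewrite /sym_monomial !card_classic_set.
rewrite (_ : [set i | _]%SET = finset.set0) ?cards0; last first.
  apply/setP => i; rewrite !inE; case: (ord2P i) => ->.
    rewrite (inj_eq g_inj) (negbTE s0) andbF /=; apply/andP => -[/eqP f0 /eqP g0].
    by move: s0; rewrite -(inj_eq g_inj) g0 f0 eqxx.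
  rewrite (inj_eq f_inj) s1 /=; apply/andP => -[/eqP f1 /eqP g0].
  by have := f_inj _ _ (etrans f1 g0).
by move=> /esym/eqP; rewrite cards_eq0 => /eqP/setP/(_ ord0); rewrite !inE !eqxx.
Qed.

Lemma sym_lift_minor_neq0 n (A : 'M[RR]_n) L (f g : 'I_2 -> 'I_n) :
  injective f -> injective g -> sym_lift A L -> ~ sym_trop_singular A f g ->
  minor L f g <> hzero.
Proof.
move=> f_inj g_inj [_ [_ [_ L_deg]]] A_ns; apply: (nonsingular_minor_neq0 L_deg A_ns).
by move=> s s' /(sym_monomial2_inj f_inj g_inj) ->.
Qed.

Definition pair_idx n (i j : 'I_n) (k : 'I_2) : 'I_n := if k == ord0 then i else j.

Lemma pair_idx_inj n (i j : 'I_n) : i != j -> injective (pair_idx i j).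
Proof.
move=> ij a b; rewrite /pair_idx.
by case: (ord2P a) => ->; case: (ord2P b) => -> //= e; move: ij; rewrite e eqxx.
Qed.

Lemma sym_trop_singular2 n (A : 'M[RR]_n) (i j : 'I_n) :
  sym_trop_singular A (pair_idx i j) (pair_idx i j) -> A i i + A j j = A i j + A j i.
Proof.
move=> [s1 [s2 [_ [+ [p [q mono_ne]]]]]]; rewrite /trop_value !sum_ord2 !perm2_max.
case: (ord2P (s1 ord0)) => a; case: (ord2P (s2 ord0)) => b; rewrite a b /= => s12.
- by case: mono_ne; rewrite (perm2_eq (etrans a (esym b))).
- by rewrite s12.
- by rewrite s12.
- by case: mono_ne; rewrite (perm2_eq (etrans a (esym b))).
Qed.

Lemma lift_rank1_of_singular2 n (A : 'M[RR]_n) : (forall i j, A i j = A j i) ->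
  (forall i j, i != j -> sym_trop_singular A (pair_idx i j) (pair_idx i j)) ->
  lift_rank_le A 1.
Proof.
move=> A_sym A_sing; apply: lift_rank1 => i j.
have [->|ij] := eqVneq i j; first lra.
by have := sym_trop_singular2 (A_sing i j ij); rewrite (A_sym j i); lra.
Qed.

Lemma perm1_eq (s : 'S_1) : s = 1%g.
Proof. by apply/permP => i; rewrite !ord1; apply/val_inj; case: (s ord0) => [[]]. Qed.

Lemma has_nonzero_minor1 n (A : 'M[RR]_n) L (i0 : 'I_n) : sym_lift A L ->
  has_nonzero_minor L 1.
Proof.
case=> _ [_ [_ L_deg]]; exists (fun _ => i0), (fun _ => i0).
have const_inj : injective (fun _ : 'I_1 => i0) by move=> a b _; rewrite !ord1.
split=> //; split=> //; apply: (minor_neq0 L_deg (s1 := 1%g)) => s.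
  by rewrite (perm1_eq s).
by rewrite (perm1_eq s).
Qed.

Lemma rank_is_of_minors n (L : 'I_n -> 'I_n -> series) r : has_nonzero_minor L r ->
  (forall k (f g : 'I_k -> 'I_n), (r < k)%nat -> minor L f g = hzero) -> rank_is L r.
Proof. by move=> L_r L_gt; split=> // k r_k [f [g [_ [_]]]]; rewrite L_gt. Qed.

Lemma rank_is_ge n (L : 'I_n -> 'I_n -> series) r k :
  rank_is L r -> has_nonzero_minor L k -> (k <= r)%nat.
Proof. by case=> _ L_gt L_k; rewrite leqNgt; apply/negP => /L_gt. Qed.

Lemma leq_inj_ord k n (f : 'I_k -> 'I_n) : injective f -> (k <= n)%nat.
Proof. by move=> /leq_card; rewrite !card_ord. Qed.

Theorem corollary2 (A : 'M[Rdefinitions.R]_3) (hsym : forall i j : 'I_3, A i j = A j i) :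
  sym_kapranov_rank_is A 2 <-> sym_trop_rank_is A 2.
Proof.
split=> [[[L0 [L0_lift L0_rank]] L_min]|[[f0 [g0 [f0_inj [g0_inj A_ns0]]]] A_max]].
- split.
  + apply: NNPP => no_ns2.
    have [L1 L1_lift L1_minors] : lift_rank_le A 1.
      apply: lift_rank1_of_singular2 => // i j ij; apply: NNPP => A_ns; apply: no_ns2.
      by exists (pair_idx i j), (pair_idx i j); have := pair_idx_inj ij.
    have L1_rank := rank_is_of_minors (has_nonzero_minor1 o0 L1_lift) L1_minors.
    by have := L_min L1 1%nat L1_lift L1_rank.
  + move=> k f g f_inj g_inj A_ns; have := leq_inj_ord f_inj.
    rewrite leq_eqVlt ltnS => /orP[/eqP k3|//]; subst k.
    have A_ns3 : ~ sym_trop_singular A id id by move/(sym_trop_singular_transfer f_inj g_inj).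
    case: L0_rank => _ L0_gt; exfalso; apply: (L0_gt 3%nat isT).
    exists id, id; do 2 split=> //.
    exact: sym_lift3_minor_neq0 hsym L0_lift A_ns3.
- have A_sing : sym_trop_singular A id id.
    by apply: NNPP => A_ns; have := A_max 3%nat id id (@inj_id _) (@inj_id _) A_ns.
  have nz L : sym_lift A L -> has_nonzero_minor L 2.
    by move=> L_lift; exists f0, g0; do 2 split=> //; exact: sym_lift_minor_neq0 L_lift A_ns0.
  have [L L_lift L_minors] := lift_rank2_of_singular hsym A_sing.
  split; first by exists L; split=> //; exact: rank_is_of_minors (nz L L_lift) L_minors.
  by move=> L' s L'_lift L'_rank; exact: rank_is_ge L'_rank (nz L' L'_lift).
Qed.
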